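(* Let $\mathbf M=(\mathbb{X},\mathbb{X}_0,\mathbf{t})$ be a Markov chain with unknown transition kernel $\mathbf{t}$, and let data $\hat X=[\hat x_1,\dots,\hat x_N]^\top$, $\hat X^+=[\hat x_1^+,\dots,\hat x_N^+]^\top$ be given with $\hat x_i^+\sim\mathbf{t}(\cdot\mid X=\hat x_i)$. Let $k_+,k_x:\mathbb{X}\times\mathbb{X}\to\mathbb{R}$ be kernels with $k_+$ universal, let $\hat\mu^N_{k_+|k_x}$ be the empirical conditional mean embedding built from $(k_+,k_x)$ and $(\hat X,\hat X^+)$, and let $$\mathcal{A}^N_\varepsilon:=\left\{\mu\in\mathcal{G}\ :\ \|\mu-\hat\mu^N_{k_+|k_x}\|_{\mathcal{G}}\le\varepsilon\right\}$$ be the ambiguity set, with radius $\varepsilon\ge 0$ chosen such that $\mathbb{P}\big(\mu_{k_+|k_x}(\mathbf{t})\in\mathcal{A}^N_\varepsilon\big)\ge 1-\rho$ for a given confidence $1-\rho\in[0,1]$. If there exists a function $B:\mathbb{X}\to\mathbb{R}_{\ge0}$ with $B\in\mathcal{H}_{k_+}$ satisfying $$\forall x\in\mathbb{X},\ \forall \mu\in\mathcal{A}^N_\varepsilon:\quad \langle B,\mu(x)\rangle_{\mathcal{H}_{k_+}}-B(x)\le c$$ for some constant $c\ge0$, then with probability at least $1-\rho$ the function $B$ satisfies $\mathbb{E}_{\mathbf{t}}[B(X^+)\mid X=x]-B(x)\le c$ for all $x\in\mathbb{X}$.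
   Context: $\mathbb{X}$ is a Polish space with Borel $\sigma$-algebra. A Markov chain $\mathbf M=(\mathbb{X},\mathbb{X}_0,\mathbf{t})$ consists of the state space $\mathbb{X}$, a set of initial states $\mathbb{X}_0\subset\mathbb{X}$ and a probability kernel $\mathbf{t}$; given the current state $x$, the next state is $X^+\sim\mathbf{t}(\cdot\mid X=x)$. The data are i.i.d. draws with $\hat x_i$ uniform on $\mathbb{X}$ and $\hat x_i^+\sim \mathbf{t}(\cdot\mid X=\hat x_i)$. All kernels are positive definite, bounded, with separable RKHSs; $\mathcal{H}_{k}$ denotes the RKHS of kernel $k$ with feature map $\phi$ satisfying $k(x,x')=\langle\phi(x),\phi(x')\rangle$; $\phi_+$ is the feature map of $k_+$. A kernel on a compact metric space is universal if its RKHS is dense in the continuous functions. $\mathcal{G}$ is the vector-valued RKHS of functions $\mathbb{X}\to\mathcal{H}_{k_+}$ with operator-valued kernel $\Gamma(x,x')=k_x(x,x')\,\mathrm{Id}_{\mathcal{H}_{k_+}}$. The conditional mean embedding (CME) of $\mathbf{t}$ is $\mu_{k_+|k_x}(\mathbf{t})(x):=\mathbb{E}_{\mathbf{t}}[\phi_+(X^+)\mid X=x]$, assumed to lie in $\mathcal{G}$; it satisfies $\mathbb{E}_{\mathbf{t}}[f(X^+)\mid X=x]=\langle f,\mu_{k_+|k_x}(\mathbf{t})(x)\rangle_{\mathcal{H}_{k_+}}$ almost surely for $f\in\mathcal{H}_{k_+}$. The empirical CME is $\hat\mu^N_{k_+|k_x}(x):=k_{\hat X}(x)^\top[K_{\hat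 X}+N\lambda I_N]^{-1}\phi_+(\hat X^+)$, where $\lambda\ge 0$ is a regularization constant (the matrix assumed invertible), $K_{\hat X}=[k_x(\hat x_i,\hat x_j)]_{i,j=1}^N$, $k_{\hat X}(x)=[k_x(x,\hat x_i)]_{i=1}^N$, and $\phi_+(\hat X^+)=[\phi_+(\hat x_i^+)]_{i=1}^N$. The probability ''at least $1-\rho$'' refers to the randomness of the data. *)

From mathcomp Require Import all_boot all_order all_algebra.
From mathcomp Require Import all_classical all_reals all_analysis.
Import GRing.Theory Num.Theory numFieldNormedType.Exports.

Set Implicit Arguments.
Unset Strict Implicit.
Unset Printing Implicit Defensive.

Local Open Scope classical_set_scope.
Local Open Scope ring_scope.

Definition polish (R : realType) (X : topologicalType) : Prop :=
  exists d : X -> X -> R,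
    [/\ (forall x y, 0 <= d x y),
        (forall x y, d x y = 0 <-> x = y),
        (forall x y, d x y = d y x),
        (forall x y z, d x z <= d x y + d y z) &
      [/\
        (forall A : set X, open A <->
           (forall x, A x -> exists2 e : R, 0 < e & forall y, d x y < e -> A y)),
        (forall u : nat -> X,
           (forall e : R, 0 < e -> exists N : nat, forall m n : nat,
               (N <= m)%N -> (N <= n)%N -> d (u m) (u n) < e) ->
           exists l : X, forall e : R, 0 < e -> exists N : nat, forall n : nat,
               (N <= n)%N -> d (u n) l < e)
      & (exists D : set X, countable D /\ closure D = setT)]].

Definition borel_of (X : ptopologicalType) := g_sigma_algebraType (@open X).

(* A (real) Hilbert space carried by a subset S of an lmodType V,      *)
(* with inner product ip (only its values on S matter).                *)
Definition ip_norm (R : realType) (V : lmodType R) (ip : V -> V -> R) (f : V) : R :=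
  Num.sqrt (ip f f).

Definition hilbert_on (R : realType) (V : lmodType R) (S : set V)
    (ip : V -> V -> R) : Prop :=
  [/\ S 0,
      (forall (a : R) f g, S f -> S g -> S (a *: f + g)),
      (forall (a : R) f g h, S f -> S g -> S h ->
          ip (a *: f + g) h = a * ip f h + ip g h) &
  [/\ (forall f g, S f -> S g -> ip f g = ip g f),
      (forall f, S f -> 0 <= ip f f),
      (forall f, S f -> ip f f = 0 -> f = 0)
    &
      (forall u : nat -> V, (forall n, S (u n)) ->
         (forall e : R, 0 < e -> exists N : nat, forall m n : nat,
            (N <= m)%N -> (N <= n)%N -> ip_norm ip (u m - u n) < e) ->
         exists2 l : V, S l & forall e : R, 0 < e -> exists N : nat,
            forall n : nat, (N <= n)%N -> ip_norm ip (u n - l) < e)]].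

Definition separable_on (R : realType) (V : lmodType R) (S : set V)
    (ip : V -> V -> R) : Prop :=
  exists D : set V, [/\ D `<=` S, countable D &
    forall f, S f -> forall e : R, 0 < e -> exists2 g, D g & ip_norm ip (f - g) < e].

Definition is_rkhs (R : realType) (X : Type) (k : X -> X -> R)
    (H : set (X -> R)) (ip : (X -> R) -> (X -> R) -> R) : Prop :=
  [/\ hilbert_on H ip,
      (forall x, H (k x))
    & (forall f x, H f -> ip f (k x) = f x)].

Definition bounded_kernel (R : realType) (X : Type) (k : X -> X -> R) : Prop :=
  exists M : R, forall x y, `|k x y| <= M.

(* Universality: the RKHS is dense in the continuous functions (uniform *)
(* approximation on every compact set; for compact X this is exactly   *)
(* density in C(X) with the sup norm).                                  *)
Definition universal_rkhs (R : realType) (X : topologicalType)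
    (H : set (X -> R)) : Prop :=
  forall (K : set X) (g : X -> R), compact K -> continuous g ->
  forall e : R, 0 < e -> exists2 f, H f & forall x, K x -> `|f x - g x| < e.

(* (G, ipG) is the vector-valued RKHS of functions X -> H_{k+} with     *)
(* operator-valued kernel Gamma(x,x') = kx x x' * Id_{H_{k+}}:          *)
(* Gamma(., x) h in G and <mu, Gamma(., x) h>_G = <mu x, h>_{H_{k+}}.   *)
Definition is_vv_rkhs (R : realType) (X : Type) (kx : X -> X -> R)
    (Hp : set (X -> R)) (ipp : (X -> R) -> (X -> R) -> R)
    (G : set (X -> X -> R)) (ipG : (X -> X -> R) -> (X -> X -> R) -> R) : Prop :=
  [/\ hilbert_on G ipG,
      (forall mu x, G mu -> Hp (mu x)),
      (forall x h, Hp h -> G (fun x' => kx x' x *: h))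
    & (forall mu x h, G mu -> Hp h ->
         ipG mu (fun x' => kx x' x *: h) = ipp (mu x) h)].

(* Conditional mean embedding of the transition kernel t:              *)
(* mu x = E_t[phi_+(X^+) | X = x], characterised (weakly) by            *)
(* mu x in H_{k+} and <f, mu x> = E_t[f(X^+) | X = x] for f in H_{k+}. *)
Definition is_cme (R : realType) (X : ptopologicalType)
    (t : R.-pker (borel_of X) ~> (borel_of X))
    (Hp : set (X -> R)) (ipp : (X -> R) -> (X -> R) -> R)
    (mu : X -> X -> R) : Prop :=
  forall x : X, Hp (mu x) /\
    forall f, Hp f -> (\int[t x]_y (f y)%:E)%E = (ipp f (mu x))%:E.

Definition gram (R : realType) (X : Type) (kx : X -> X -> R) (N : nat)
    (xs : 'I_N -> X) : 'M[R]_N :=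
  \matrix_(i, j) kx (xs i) (xs j).

(* Empirical CME:  k_X(x)^T [K_X + N lam I]^{-1} phi_+(X^+)            *)
Definition emp_cme (R : realType) (X : Type) (kx kp : X -> X -> R) (N : nat)
    (lam : R) (xs xps : 'I_N -> X) : X -> X -> R :=
  let Minv := invmx (gram kx xs + (N%:R * lam)%:M) in
  fun x y => \sum_(i < N) \sum_(j < N) kx x (xs i) * Minv i j * kp (xps j) y.

Definition ambiguity_set (R : realType) (X : Type) (G : set (X -> X -> R))
    (ipG : (X -> X -> R) -> (X -> X -> R) -> R) (muhat : X -> X -> R) (eps : R)
    : set (X -> X -> R) :=
  [set mu | G mu /\ ip_norm ipG (mu - muhat) <= eps].

From mathcomp Require Import all_boot all_order all_algebra.
From mathcomp Require Import all_classical all_reals all_analysis.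
Import GRing.Theory Num.Theory numFieldNormedType.Exports.
Local Open Scope classical_set_scope.
Local Open Scope ring_scope.

(* On the event that the true CME lies in the ambiguity set, the robust
   condition applies to it, and the CME turns <B, mu_t x> into E_t[B(X+) | x]. *)

Lemma cme_drift_le {R : realType} {X : ptopologicalType}
    {t : R.-pker (borel_of X) ~> (borel_of X)}
    {Hp : set (X -> R)} {ipp : (X -> R) -> (X -> R) -> R} {mu : X -> X -> R}
    {f : X -> R} {c : R} {x : X} :
  is_cme t Hp ipp mu -> Hp f -> ipp f (mu x) - f x <= c ->
  (\int[t x]_y (f y)%:E - (f x)%:E <= c%:E)%E.
Proof.
move=> cme_mu Hpf drift_le; have [_ ->] := cme_mu x; last exact: Hpf.
by rewrite -EFinD lee_fin.
Qed.

Theorem theorem1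
  (R : realType)
  (* Markov chain M = (X, X0, t) on a Polish space X with Borel sigma-algebra *)
  (X : ptopologicalType) (hX : polish R X) (X0 : set X)
  (t : R.-pker (borel_of X) ~> (borel_of X))
  (* kernels k_+ and k_x with their (bounded, separable) RKHSs, k_+ universal *)
  (kp kx : X -> X -> R)
  (Hp : set (X -> R)) (ipp : (X -> R) -> (X -> R) -> R)
  (Hx : set (X -> R)) (ipx : (X -> R) -> (X -> R) -> R)
  (hkp : is_rkhs kp Hp ipp) (hkx : is_rkhs kx Hx ipx)
  (hkp_bdd : bounded_kernel kp) (hkx_bdd : bounded_kernel kx)
  (hHp_sep : separable_on Hp ipp) (hHx_sep : separable_on Hx ipx)
  (hkp_univ : universal_rkhs Hp)
  (* the vector-valued RKHS G with kernel Gamma(x,x') = kx(x,x') Id *)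
  (G : set (X -> X -> R)) (ipG : (X -> X -> R) -> (X -> X -> R) -> R)
  (hG : is_vv_rkhs kx Hp ipp G ipG)
  (* the true CME of t, assumed to lie in G *)
  (mu_t : X -> X -> R) (hcme : is_cme t Hp ipp mu_t) (hmuG : G mu_t)
  (* data: N i.i.d. pairs (xhat_i, xhat_i^+), xhat_i ~ U (uniform on X), *)
  (* xhat_i^+ ~ t(. | xhat_i), defined on a probability space (Omega, P)  *)
  (dO : measure_display) (Omega : measurableType dO) (P : probability Omega R)
  (U : probability (borel_of X) R)
  (N : nat) (xs xps : 'I_N -> Omega -> borel_of X)
  (hmeas : forall i, measurable_fun setT (xs i) /\ measurable_fun setT (xps i))
  (hlaw : forall i (A B : set (borel_of X)), measurable A -> measurable B ->
     P [set w | A (xs i w) /\ B (xps i w)] = (\int[U]_(x in A) t x B)%E)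
  (hindep : forall C : 'I_N -> set (borel_of X * borel_of X)%type,
     (forall i, measurable (C i)) ->
     P (\bigcap_(i in [set: 'I_N]) [set w | C i (xs i w, xps i w)]) =
       (\prod_(i < N) P [set w | C i (xs i w, xps i w)])%E)
  (* regularisation; the regularised Gram matrix is invertible *)
  (lam : R) (hlam : 0 <= lam)
  (hinv : forall w, gram kx (fun i => xs i w) + (N%:R * lam)%:M \in unitmx)
  (* confidence level and radius of the ambiguity set *)
  (rho eps : R) (hrho : 0 <= rho <= 1) (heps : 0 <= eps)
  (hconf :
     measurable [set w | ambiguity_set G ipG
        (emp_cme kx kp lam (fun i => xs i w) (fun i => xps i w)) eps mu_t] /\
     ((1 - rho)%:E <= P [set w | ambiguity_set G ipG
        (emp_cme kx kp lam (fun i => xs i w) (fun i => xps i w)) eps mu_t])%E)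
  (* the certificate B (possibly data dependent) and the constant c *)
  (c : R) (hc : 0 <= c) (B : Omega -> X -> R)
  (hB : forall w, Hp (B w) /\ forall x, 0 <= B w x)
  (hBcond : forall w (x : X) (mu : X -> X -> R),
     ambiguity_set G ipG
       (emp_cme kx kp lam (fun i => xs i w) (fun i => xps i w)) eps mu ->
     ipp (B w) (mu x) - B w x <= c) :
  exists2 E : set Omega, measurable E /\ ((1 - rho)%:E <= P E)%E &
    forall w, E w -> forall x : X,
      (\int[t x]_y (B w y)%:E - (B w x)%:E <= c%:E)%E.
Proof.
set E := [set w | ambiguity_set G ipG
  (emp_cme kx kp lam (fun i => xs i w) (fun i => xps i w)) eps mu_t].
exists E; first exact: hconf.
move=> w Ew x; apply: (cme_drift_le hcme (proj1 (hB w))).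
exact: hBcond.
Qed.
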